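(* On $\mathbb R^8$ with coframe $e^0,\dots,e^7$, let $\Omega=(e^4+ie^0)\wedge(e^1+ie^5)\wedge(e^2+ie^6)\wedge(e^3+ie^7)$, $\omega=e^{15}+e^{26}+e^{37}+e^{40}$, and for $\tau\in\mathbb R$ let $\Phi_\tau=\cosh(2\tau)\mathrm{Re}(\Omega)-\tfrac12\omega\wedge\omega+i\sinh(2\tau)\mathrm{Im}(\Omega)$. For $\tau\neq0$, the stabiliser of $\Phi_\tau$ in $\mathrm{GL}(8,\mathbb R)$ (acting by pullback) is the group $\mathrm{SU}(4)$ of linear maps preserving the Euclidean metric $g=\sum_a(e^a)^2$, $\omega$ and $\Omega$.
   Context: Notation: $e^{ab}=e^a\wedge e^b$. For $\tau=0$, $\Phi_0$ is the (real) Cayley form, whose stabiliser is $\mathrm{Spin}(7)$. *)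

From HB Require Import structures.
From mathcomp Require Import all_boot all_order all_algebra all_fingroup.
From mathcomp Require Import complex.
From mathcomp Require Import reals sequences.
Set Implicit Arguments. Unset Strict Implicit. Unset Printing Implicit Defensive.
Import Order.TTheory GRing.Theory Num.Theory.
Local Open Scope ring_scope.
Local Open Scope complex_scope.

Section Forms.
Variable R : realType.
Local Notation C := (R[i]).

Definition coshR (x : R) : R := (expR x + expR (- x)) / 2.
Definition sinhR (x : R) : R := (expR x - expR (- x)) / 2.

Definition vec := 'cV[R]_8.
Definition e (a : 'I_8) (v : vec) : R := v a 0.
Definition eC (a : 'I_8) (v : vec) : C := (e a v)%:C.

Definition form4 (K : Type) := ('I_4 -> vec) -> K.
Definition form2 := vec -> vec -> R.

Definition pullback4 K (A : 'M[R]_8) (al : form4 K) : form4 K :=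
  fun v => al (fun j => A *m v j).
Definition pullback2 (A : 'M[R]_8) (al : form2) : form2 :=
  fun u w => al (A *m u) (A *m w).

Definition wedge1_4 (th : 'I_4 -> vec -> C) : form4 C :=
  fun v => \det (\matrix_(i < 4, j < 4) th i (v j)).

(* wedge of two 2-forms, determinant convention:
   (a /\ b)(v0..v3) = 1/(2!2!) sum_s sgn s a(v_s0,v_s1) b(v_s2,v_s3) *)
Definition wedge2_2 (al be : form2) : form4 R :=
  fun v => 4^-1 * \sum_(s : 'S_4)
     (-1) ^+ s * al (v (s 0)) (v (s 1)) * be (v (s 2)) (v (s 3)).

Definition e2 (a b : 'I_8) : form2 := fun u w => e a u * e b w - e a w * e b u.

Definition i8 (k : nat) : 'I_8 := inord k.

(* Omega = (e4 + i e0) /\ (e1 + i e5) /\ (e2 + i e6) /\ (e3 + i e7) *)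
Definition theta (i : 'I_4) : vec -> C :=
  fun v => (eC (i8 (nth 0%N [:: 4; 1; 2; 3]%N i)) v + 'i%C * eC (i8 (nth 0%N [:: 0; 5; 6; 7]%N i)) v)%R.
Definition Omega : form4 C := wedge1_4 theta.

Definition omega : form2 := fun u w =>
  e2 (i8 1) (i8 5) u w + e2 (i8 2) (i8 6) u w + e2 (i8 3) (i8 7) u w
  + e2 (i8 4) (i8 0) u w.

Definition Phi (tau : R) : form4 C := fun v =>
  ((coshR (2 * tau) * complex.Re (Omega v) - 2^-1 * wedge2_2 omega omega v)%:C
   + 'i%C * (sinhR (2 * tau) * complex.Im (Omega v))%:C)%R.

Definition g (u w : vec) : R := \sum_(a < 8) e a u * e a w.

Definition stab_Phi (tau : R) (A : 'M[R]_8) : Prop :=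
  A \in unitmx /\ pullback4 A (Phi tau) = Phi tau.

Definition SU4 (A : 'M[R]_8) : Prop :=
  A \in unitmx /\
  (forall u w : vec, g (A *m u) (A *m w) = g u w) /\
  pullback2 A omega = omega /\
  pullback4 A Omega = Omega.

End Forms.

From HB Require Import structures.
From mathcomp Require Import all_boot all_order all_algebra all_fingroup.
From mathcomp Require Import complex.
From mathcomp Require Import reals sequences.
From mathcomp Require exp.
From mathcomp Require Import ring lra.
From Stdlib Require Import FunctionalExtensionality.
Import Order.TTheory GRing.Theory Num.Theory.

(* Let J be the complex structure with theta_i o J = i theta_i, so that Omega is
   complex-linear.  If A fixes Phi_tau with tau <> 0, it fixes Im Omega and
   c Re Omega - 1/2 omega /\ omega with c = cosh (2 tau) > 0.  Omega vanishes on
   (u, Ju, _, _), and a pair (a, b) on which Im Omega vanishes spans a single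
   complex line; hence B = A J A^-1 maps every u into span (u, Ju), so B is
   r + s J, and B^2 = -1 forces B = +-J.
   If A anticommutes with J it is antilinear, Re (Omega o A) = - Re Omega, and
   evaluating the real part on the unitary frame and on its image under 1 + J
   gives opposite signs for c.  If A commutes with J it is complex linear with
   complex determinant 1 (from Im Omega), so it preserves Omega and hence the
   Pfaffian of omega.  The Pfaffian identities in the image of the unitary
   frame, together with positivity of g = omega (J _, _), force the matrix of
   omega to be the standard one; so A preserves omega and then g. *)

Set Implicit Arguments. Unset Strict Implicit. Unset Printing Implicit Defensive.
Local Open Scope ring_scope.

Section Det4.
Variable T : comNzRingType.

Lemma big_ord4 (F : 'I_4 -> T) :
  \sum_(b < 4) F b = F (inord 0) + (F (inord 1) + (F (inord 2) + F (inord 3))).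
Proof.
rewrite !big_ord_recl big_ord0 addr0.
by repeat congr (_ + _); congr F; apply/val_inj; rewrite /= inordK.
Qed.

Lemma big_ord8 (F : 'I_8 -> T) :
  \sum_(b < 8) F b = F (inord 0) + (F (inord 1) + (F (inord 2) + (F (inord 3) +
     (F (inord 4) + (F (inord 5) + (F (inord 6) + F (inord 7))))))).
Proof.
rewrite !big_ord_recl big_ord0 addr0.
by repeat congr (_ + _); congr F; apply/val_inj; rewrite /= inordK.
Qed.

Definition det4 (m : nat -> nat -> T) : T :=
  m 0 0 * m 1 1 * m 2 2 * m 3 3 - m 0 0 * m 1 1 * m 2 3 * m 3 2 - m 0 0 * m 1 2 * m 2 1 * m 3 3
  + m 0 0 * m 1 2 * m 2 3 * m 3 1 + m 0 0 * m 1 3 * m 2 1 * m 3 2 - m 0 0 * m 1 3 * m 2 2 * m 3 1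
  - m 0 1 * m 1 0 * m 2 2 * m 3 3 + m 0 1 * m 1 0 * m 2 3 * m 3 2 + m 0 1 * m 1 2 * m 2 0 * m 3 3
  - m 0 1 * m 1 2 * m 2 3 * m 3 0 - m 0 1 * m 1 3 * m 2 0 * m 3 2 + m 0 1 * m 1 3 * m 2 2 * m 3 0
  + m 0 2 * m 1 0 * m 2 1 * m 3 3 - m 0 2 * m 1 0 * m 2 3 * m 3 1 - m 0 2 * m 1 1 * m 2 0 * m 3 3
  + m 0 2 * m 1 1 * m 2 3 * m 3 0 + m 0 2 * m 1 3 * m 2 0 * m 3 1 - m 0 2 * m 1 3 * m 2 1 * m 3 0
  - m 0 3 * m 1 0 * m 2 1 * m 3 2 + m 0 3 * m 1 0 * m 2 2 * m 3 1 + m 0 3 * m 1 1 * m 2 0 * m 3 2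
  - m 0 3 * m 1 1 * m 2 2 * m 3 0 - m 0 3 * m 1 2 * m 2 0 * m 3 1 + m 0 3 * m 1 2 * m 2 1 * m 3 0.

Lemma det_mx4 (m : nat -> nat -> T) : \det (\matrix_(i < 4, j < 4) m i j) = det4 m.
Proof.
do 4 rewrite !(expand_det_row _ ord0) !big_ord_recl !big_ord0 /cofactor.
by rewrite !det_mx00 !mxE /= /det4; ring.
Qed.

Definition pfaff (V : Type) (f : V -> V -> T) (a b c d : V) : T :=
  f a b * f c d - f a c * f b d + f a d * f b c.

(* The rows (f x c, [x = c], f x d, [x = d]) turn f (s 0) (s 1) * f (s 2) (s 3)
   into a sum over c, d of products along s, so the alternating sum over S_4
   becomes a sum of 16 determinants. *)
Definition delta_rows (f : nat -> nat -> T) (c d i x : nat) : T :=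
  match i with
  | 0 => f x c
  | 1 => (x == c)%:R
  | 2 => f x d
  | _ => (x == d)%:R
  end.

Lemma sum_delta_ord4 (F : 'I_4 -> T) (x : 'I_4) :
  \sum_(c < 4) F c * (nat_of_ord x == nat_of_ord c)%:R = F x.
Proof.
rewrite (bigD1 x) //= eqxx mulr1 big1 ?addr0 // => c Hc.
by rewrite eq_sym (inj_eq val_inj) (negbTE Hc) mulr0.
Qed.

Lemma alternating_sum_perm4 (f : nat -> nat -> T) :
  (forall a b, f a b = - f b a) ->
  \sum_(s : 'S_4) (-1) ^+ s * f (s 0) (s 1) * f (s 2) (s 3) = 8 * pfaff f 0 1 2 3.
Proof.
move=> f_skew.
have ord4E : [/\ (0 : 'I_4) = ord0, (1 : 'I_4) = lift ord0 ord0,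
  (2 : 'I_4) = lift ord0 (lift ord0 ord0) &
  (3 : 'I_4) = lift ord0 (lift ord0 (lift ord0 ord0))] by split; apply/val_inj.
have prod_expand (s : 'S_4) : f (s 0) (s 1) * f (s 2) (s 3) =
    \sum_(c < 4) \sum_(d < 4) \prod_(i < 4) delta_rows f c d i (s i).
  transitivity (\sum_(c < 4) \sum_(d < 4)
      ((f (s 0) c * (nat_of_ord (s 1) == nat_of_ord c)%:R) *
       (f (s 2) d * (nat_of_ord (s 3) == nat_of_ord d)%:R))); last first.
    apply: eq_bigr => c _; apply: eq_bigr => d _.
    by case: ord4E => -> -> -> ->; rewrite !big_ord_recl big_ord0 /=; ring.
  transitivity (\sum_(c < 4) (f (s 0) c * (nat_of_ord (s 1) == nat_of_ord c)%:R)
      * f (s 2) (s 3)); last first.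
    apply: eq_bigr => c _; rewrite -mulr_sumr; congr (_ * _).
    by rewrite (sum_delta_ord4 (fun d => f (s 2) d)).
  by rewrite -mulr_suml (sum_delta_ord4 (fun c => f (s 0) c)).
have det_delta c d : \sum_(s : 'S_4) (-1) ^+ s * \prod_(i < 4) delta_rows f c d i (s i)
    = \det (\matrix_(i < 4, j < 4) delta_rows f c d i j).
  by apply: eq_bigr => s _; congr (_ * _); apply: eq_bigr => i _; rewrite mxE.
under eq_bigr => s _ do rewrite -mulrA prod_expand mulr_sumr.
under eq_bigr => s _ do under eq_bigr => c _ do rewrite mulr_sumr.
rewrite exchange_big /=; under eq_bigr => c _ do rewrite exchange_big /=.
under eq_bigr => c _ do under eq_bigr => d _ do rewrite det_delta det_mx4.
rewrite /det4 !big_ord_recl !big_ord0 /= /pfaff.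
rewrite !(f_skew 1%N 0%N) !(f_skew 2%N 0%N) !(f_skew 3%N 0%N) !(f_skew 2%N 1%N)
  !(f_skew 3%N 1%N) !(f_skew 3%N 2%N).
ring.
Qed.

End Det4.

Lemma forall_ord4 (P : 'I_4 -> Prop) :
  P (inord 0) -> P (inord 1) -> P (inord 2) -> P (inord 3) -> forall i, P i.
Proof.
move=> h0 h1 h2 h3 i; rewrite -(inord_val i).
by case: i => [[|[|[|[|?]]]] hi].
Qed.

Local Open Scope complex_scope.

Section Frame.
Variable R : realType.
Local Notation vec := (vec R).

Definition vcoord (v : vec) (k : nat) : R := v (inord k) 0.
Definition bvec (k : nat) : vec := delta_mx (inord k) 0.

Definition re_idx (i : nat) : nat := nth 0%N [:: 4; 1; 2; 3]%N i.
Definition im_idx (i : nat) : nat := nth 0%N [:: 0; 5; 6; 7]%N i.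
Definition bre (i : nat) : vec := bvec (re_idx i).
Definition bim (i : nat) : vec := bvec (im_idx i).

Lemma vcoord_bvec k l : (k < 8)%N -> (l < 8)%N -> vcoord (bvec k) l = (l == k)%:R.
Proof.
by move=> hk hl; rewrite /vcoord /bvec mxE -(inj_eq val_inj) /= !inordK // andbT.
Qed.

Lemma vcoordD (u w : vec) k : vcoord (u + w) k = vcoord u k + vcoord w k.
Proof. by rewrite /vcoord mxE. Qed.
Lemma vcoordB (u w : vec) k : vcoord (u - w) k = vcoord u k - vcoord w k.
Proof. by rewrite /vcoord !mxE. Qed.
Lemma vcoordZ r (u : vec) k : vcoord (r *: u) k = r * vcoord u k.
Proof. by rewrite /vcoord mxE. Qed.
Lemma vcoordN (u : vec) k : vcoord (- u) k = - vcoord u k.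
Proof. by rewrite /vcoord mxE. Qed.

Lemma vcoord_inj (u w : vec) : (forall k, (k < 8)%N -> vcoord u k = vcoord w k) -> u = w.
Proof.
move=> H; apply/matrixP => a b; rewrite (ord1 b) -(inord_val a); exact: H (ltn_ord a).
Qed.

Lemma matrix_bvecP (M N : 'M[R]_8) :
  (forall k, (k < 8)%N -> M *m bvec k = N *m bvec k) -> M = N.
Proof.
move=> H; apply/matrixP => a b.
have := congr1 (fun X : vec => X a 0) (H _ (ltn_ord b)).
by rewrite /bvec inord_val -!colE !mxE.
Qed.

Lemma vcoord_mul (A : 'M[R]_8) (v : vec) k : vcoord (A *m v) k =
  A (inord k) (inord 0) * vcoord v 0 + (A (inord k) (inord 1) * vcoord v 1 +
  (A (inord k) (inord 2) * vcoord v 2 + (A (inord k) (inord 3) * vcoord v 3 +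
  (A (inord k) (inord 4) * vcoord v 4 + (A (inord k) (inord 5) * vcoord v 5 +
  (A (inord k) (inord 6) * vcoord v 6 + A (inord k) (inord 7) * vcoord v 7)))))).
Proof. by rewrite /vcoord mxE big_ord8. Qed.

Lemma bvec_neq0 k : (k < 8)%N -> bvec k != 0.
Proof.
move=> hk; apply/eqP => /(congr1 (vcoord^~ k)).
by rewrite vcoord_bvec // eqxx /vcoord mxE; apply/eqP; rewrite oner_eq0.
Qed.

Lemma bvecD_neq0 a b : (a < 8)%N -> (b < 8)%N -> a != b -> bvec a + bvec b != 0.
Proof.
move=> ha hb ab; apply/eqP => /(congr1 (vcoord^~ a)).
by rewrite vcoordD !vcoord_bvec // eqxx (negbTE ab) /vcoord mxE addr0; apply/eqP; rewrite oner_eq0.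
Qed.

(* The complex structure for which Omega is complex-linear (see theta_J). *)
Definition Jentry (a b : nat) : R :=
  match a, b with
  | 4, 0 => -1 | 0, 4 => 1 | 1, 5 => -1 | 5, 1 => 1
  | 2, 6 => -1 | 6, 2 => 1 | 3, 7 => -1 | 7, 3 => 1
  | _, _ => 0 end.
Definition Jmx : 'M[R]_8 := \matrix_(a, b) Jentry a b.

Definition Jcoord (v : vec) (k : nat) : R :=
  match k with
  | 0 => vcoord v 4 | 4 => - vcoord v 0 | 1 => - vcoord v 5 | 5 => vcoord v 1
  | 2 => - vcoord v 6 | 6 => vcoord v 2 | 3 => - vcoord v 7 | 7 => vcoord v 3 | _ => 0 end.

Lemma vcoord_J (v : vec) k : (k < 8)%N -> vcoord (Jmx *m v) k = Jcoord v k.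
Proof.
move=> hk; rewrite /vcoord mxE big_ord8 !mxE !inordK //.
by do 8? (case: k hk => [|k] hk); rewrite /= /vcoord; ring.
Qed.

Lemma JmxK (v : vec) : Jmx *m (Jmx *m v) = - v.
Proof.
apply: vcoord_inj => k hk; rewrite vcoordN vcoord_J //.
by do 8? (case: k hk => [|k] hk); rewrite /= ?vcoord_J //= ?opprK.
Qed.

Lemma Jmx_sqr : Jmx *m Jmx = - 1%:M.
Proof. by apply: matrix_bvecP => k hk; rewrite -mulmxA JmxK mulNmx mul1mx. Qed.

Definition jsign (k : nat) : R := match k with 0 | 5 | 6 | 7 => -1 | _ => 1 end.
Definition jpartner (k : nat) : nat :=
  match k with 0 => 4 | 4 => 0 | 1 => 5 | 5 => 1 | 2 => 6 | 6 => 2 | 3 => 7 | 7 => 3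
  | _ => 0 end%N.

Lemma J_bvec k : (k < 8)%N -> Jmx *m bvec k = jsign k *: bvec (jpartner k).
Proof.
move=> hk; apply: vcoord_inj => l hl; rewrite vcoord_J // vcoordZ.
by do 8? (case: k hk => [|k] hk); do 8? (case: l hl => [|l] hl);
  rewrite //= ?vcoord_bvec //= ?mulr0 ?mulr1 ?oppr0.
Qed.

Lemma jsign_neq0 k : jsign k != 0.
Proof. by do 8? (case: k => [|k]); rewrite /= ?oppr_eq0 oner_eq0. Qed.

Lemma J_bre k : (k < 4)%N -> Jmx *m bre k = bim k.
Proof. by move=> hk; rewrite J_bvec; do 4? (case: k hk => [|k] hk); rewrite //= scale1r. Qed.

Lemma J_bim k : (k < 4)%N -> Jmx *m bim k = - bre k.
Proof. by move=> hk; rewrite J_bvec; do 4? (case: k hk => [|k] hk); rewrite //= scaleN1r. Qed.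

Lemma thetaE (i : 'I_4) (v : vec) :
  theta i v = (vcoord v (re_idx i))%:C + 'i%C * (vcoord v (im_idx i))%:C.
Proof. by []. Qed.

Lemma thetaD i (u w : vec) : theta i (u + w) = theta i u + theta i w.
Proof. by rewrite !thetaE !vcoordD !rmorphD; ring. Qed.
Lemma thetaZ i r (u : vec) : theta i (r *: u) = r%:C * theta i u.
Proof. by rewrite !thetaE !vcoordZ !rmorphM; ring. Qed.
Lemma thetaN i (u : vec) : theta i (- u) = - theta i u.
Proof. by rewrite !thetaE !vcoordN !rmorphN; ring. Qed.
Lemma theta0 i : theta i (0 : vec) = 0.
Proof. by rewrite -(scale0r 0) thetaZ mul0r. Qed.

Lemma Re_theta i (v : vec) : complex.Re (theta i v) = vcoord v (re_idx i).
Proof. by rewrite thetaE /=; ring. Qed.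
Lemma Im_theta i (v : vec) : complex.Im (theta i v) = vcoord v (im_idx i).
Proof. by rewrite thetaE /=; ring. Qed.

Lemma theta_J i (v : vec) : theta i (Jmx *m v) = 'i%C * theta i v.
Proof.
move: i; apply: forall_ord4; rewrite !thetaE /re_idx /im_idx !inordK //= !vcoord_J //=;
  apply/eqP; rewrite eq_complex /=; apply/andP; split; apply/eqP; ring.
Qed.

Lemma theta_bre a b : (a < 4)%N -> (b < 4)%N -> theta (inord a) (bre b) = (a == b)%:R.
Proof.
move=> ha hb; rewrite thetaE /bre /re_idx /im_idx inordK //.
by do 4? (case: a ha => [|a] ha); do 4? (case: b hb => [|b] hb);
  rewrite //= !vcoord_bvec //= ?mulr0 ?addr0.
Qed.

Lemma theta_bim a b : (a < 4)%N -> (b < 4)%N -> theta (inord a) (bim b) = (a == b)%:R * 'i%C.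
Proof.
move=> ha hb; rewrite thetaE /bim /re_idx /im_idx inordK //.
by do 4? (case: a ha => [|a] ha); do 4? (case: b hb => [|b] hb);
  rewrite //= !vcoord_bvec //= ?mulr0 ?mulr1 ?mul0r ?add0r ?addr0 ?mul1r.
Qed.

Lemma theta_inj (u w : vec) : (forall i, theta i u = theta i w) -> u = w.
Proof.
move=> H; apply: vcoord_inj => k hk.
have Hre a : (a < 4)%N -> vcoord u (re_idx a) = vcoord w (re_idx a).
  by move=> ha; rewrite -(@inordK 3 a ha) -!Re_theta H.
have Him a : (a < 4)%N -> vcoord u (im_idx a) = vcoord w (im_idx a).
  by move=> ha; rewrite -(@inordK 3 a ha) -!Im_theta H.
by do 8? (case: k hk => [|k] hk); [exact: (Him 0%N) | exact: (Hre 1%N)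
  | exact: (Hre 2%N) | exact: (Hre 3%N) | exact: (Hre 0%N) | exact: (Him 1%N)
  | exact: (Him 2%N) | exact: (Him 3%N) | by []].
Qed.

Lemma theta_mul (A : 'M[R]_8) i (v : vec) : theta i (A *m v) =
  (vcoord v 0)%:C * theta i (A *m bvec 0) + ((vcoord v 1)%:C * theta i (A *m bvec 1) +
  ((vcoord v 2)%:C * theta i (A *m bvec 2) + ((vcoord v 3)%:C * theta i (A *m bvec 3) +
  ((vcoord v 4)%:C * theta i (A *m bvec 4) + ((vcoord v 5)%:C * theta i (A *m bvec 5) +
  ((vcoord v 6)%:C * theta i (A *m bvec 6) + (vcoord v 7)%:C * theta i (A *m bvec 7))))))).
Proof. by rewrite !thetaE !vcoord_mul !vcoord_bvec //= !(rmorphD, rmorphM) /=; ring. Qed.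

Definition tup4 (a b c d : vec) : 'I_4 -> vec := fun j => nth a [:: a; b; c; d] j.

Lemma tup4E a b c d :
  [/\ tup4 a b c d (inord 0) = a, tup4 a b c d (inord 1) = b,
      tup4 a b c d (inord 2) = c & tup4 a b c d (inord 3) = d].
Proof. by rewrite /tup4 !inordK. Qed.

Lemma OmegaE (V : 'I_4 -> vec) : Omega V = det4 (fun a b => theta (inord a) (V (inord b))).
Proof.
rewrite /Omega /wedge1_4 -det_mx4; congr (\det _).
by apply/matrixP => i j; rewrite !mxE !inord_val.
Qed.

Lemma Omega_tup4 a b c d : Omega (tup4 a b c d) =
  det4 (fun k l => theta (inord k) (nth a [:: a; b; c; d] l)).
Proof. by rewrite OmegaE /det4 /=; case: (tup4E a b c d) => -> -> -> ->. Qed.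

Definition frame_re : 'I_4 -> vec := tup4 (bre 0) (bre 1) (bre 2) (bre 3).
Definition frame_im0 : 'I_4 -> vec := tup4 (bim 0) (bre 1) (bre 2) (bre 3).

Lemma Omega_frame_re : Omega frame_re = 1.
Proof. by rewrite Omega_tup4 /det4 /= !theta_bre //=; ring. Qed.

Lemma Omega_frame_im0 : Omega frame_im0 = 'i%C.
Proof. by rewrite Omega_tup4 /det4 /= !theta_bre // !theta_bim //=; ring. Qed.

End Frame.

Arguments bvec {R} k.
Arguments bre {R} i.
Arguments bim {R} i.
Arguments Jmx {R}.
Arguments jsign {R} k.
Arguments frame_re {R}.
Arguments frame_im0 {R}.

Section ComplexLines.
Variable R : realType.
Local Notation C := (R[i]).
Local Notation vec := (vec R).

Lemma complex_eq0 (z : C) : complex.Im z = 0 -> complex.Im ('i%C * z) = 0 -> z = 0.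
Proof.
case: z => x y /= hy hx; apply/eqP; rewrite eq_complex /=.
by apply/andP; split; apply/eqP; lra.
Qed.

Lemma Omega_bim_last (a b : vec) k l : (k < 4)%N -> (l < 4)%N ->
  Omega (tup4 a b (bre k) (bim l)) = 'i%C * Omega (tup4 a b (bre k) (bre l)).
Proof. by move=> hk hl; rewrite !Omega_tup4 /det4 /= !theta_bre // !theta_bim //; ring. Qed.

Lemma theta_minors_eq0 (a b : vec) :
  (forall x y, complex.Im (Omega (tup4 a b x y)) = 0) ->
  forall m n, (m < 4)%N -> (n < 4)%N ->
  theta (inord m) a * theta (inord n) b = theta (inord n) a * theta (inord m) b.
Proof.
move=> ImOm0.
have Om0 k l : (k < 4)%N -> (l < 4)%N -> Omega (tup4 a b (bre k) (bre l)) = 0.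
  move=> hk hl; apply: complex_eq0; first exact: ImOm0.
  by rewrite -Omega_bim_last //; exact: ImOm0.
pose minor m n := theta (inord m) a * theta (inord n) b - theta (inord n) a * theta (inord m) b.
have skew m n : minor m n = - minor n m by rewrite /minor; ring.
(* Omega (a, b, bre k, bre l) is, up to sign, the minor on the two rows other than k, l. *)
have M01 : minor 0%N 1%N = 0.
  by rewrite -(Om0 2%N 3%N) // Omega_tup4 /det4 /= !theta_bre //= /minor; ring.
have M02 : minor 0%N 2%N = 0.
  by rewrite -oppr0 -(Om0 1%N 3%N) // Omega_tup4 /det4 /= !theta_bre //= /minor; ring.
have M03 : minor 0%N 3%N = 0.
  by rewrite -(Om0 1%N 2%N) // Omega_tup4 /det4 /= !theta_bre //= /minor; ring.
have M12 : minor 1%N 2%N = 0.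
  by rewrite -(Om0 0%N 3%N) // Omega_tup4 /det4 /= !theta_bre //= /minor; ring.
have M13 : minor 1%N 3%N = 0.
  by rewrite -oppr0 -(Om0 0%N 2%N) // Omega_tup4 /det4 /= !theta_bre //= /minor; ring.
have M23 : minor 2%N 3%N = 0.
  by rewrite -(Om0 0%N 1%N) // Omega_tup4 /det4 /= !theta_bre //= /minor; ring.
move=> m n hm hn; apply/eqP; rewrite -subr_eq0 -/(minor m n); apply/eqP.
by do 4? (case: m hm => [|m] hm); do 4? (case: n hn => [|n] hn);
  first [ by rewrite /minor subrr | by rewrite ?(M01, M02, M03, M12, M13, M23)
        | by rewrite skew ?(M01, M02, M03, M12, M13, M23) oppr0 ].
Qed.

Lemma complex_line_of_theta_minors (a b : vec) : a != 0 ->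
  (forall m n, (m < 4)%N -> (n < 4)%N ->
    theta (inord m) a * theta (inord n) b = theta (inord n) a * theta (inord m) b) ->
  exists r s : R, b = r *: a + s *: (Jmx *m a).
Proof.
move=> a0 minors0.
have [m [hm am0]] : exists m, (m < 4)%N /\ theta (inord m) a != 0.
  case: (eqVneq (theta (inord 0) a) 0) => h0; last by exists 0%N.
  case: (eqVneq (theta (inord 1) a) 0) => h1; last by exists 1%N.
  case: (eqVneq (theta (inord 2) a) 0) => h2; last by exists 2%N.
  case: (eqVneq (theta (inord 3) a) 0) => h3; last by exists 3%N.
  by case/eqP: a0; apply: theta_inj; apply: forall_ord4; rewrite theta0.
pose lam := theta (inord m) b / theta (inord m) a.
have theta_b n : (n < 4)%N -> theta (inord n) b = lam * theta (inord n) a.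
  by move=> hn; apply: (mulfI am0); rewrite (minors0 m n hm hn) /lam; field.
exists (complex.Re lam), (complex.Im lam).
apply: theta_inj => i; rewrite thetaD !thetaZ theta_J -(inord_val i).
by rewrite (theta_b _ (ltn_ord i)) {1}(complexE lam); ring.
Qed.

Lemma Omega_J_pair (v x y : vec) : Omega (tup4 v (Jmx *m v) x y) = 0.
Proof. by rewrite Omega_tup4 /det4 /= !theta_J; ring. Qed.

Lemma conjJ_complex_line (A : 'M[R]_8) : A \in unitmx ->
  (forall V : 'I_4 -> vec, complex.Im (Omega (fun j => A *m V j)) = complex.Im (Omega V)) ->
  forall u : vec, u != 0 -> exists r s : R,
     A *m Jmx *m invmx A *m u = r *: u + s *: (Jmx *m u).
Proof.
move=> uA ImOmA u u0.
pose v := invmx A *m u.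
have ->: A *m Jmx *m invmx A *m u = A *m (Jmx *m v) by rewrite /v !mulmxA.
apply: complex_line_of_theta_minors => //; apply: theta_minors_eq0 => x y.
transitivity (complex.Im (Omega (tup4 v (Jmx *m v) (invmx A *m x) (invmx A *m y))));
  last by rewrite Omega_J_pair.
rewrite -(ImOmA (tup4 v _ _ _)).
congr (complex.Im (Omega _)); apply: functional_extensionality => j.
by rewrite -(inord_val j) /tup4; case: j => [[|[|[|[|?]]]] hj] //=; rewrite inordK //= ?mulKVmx.
Qed.

Lemma complex_line_coeff_eq (B : 'M[R]_8) (a b : nat) (r1 s1 r2 s2 r s : R) :
  (a < 8)%N -> (b < 8)%N -> (jpartner a < 8)%N -> (jpartner b < 8)%N ->
  [&& a != b, a != jpartner b, jpartner a != b, jpartner a != jpartner b & a != jpartner a] ->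
  b != jpartner b ->
  B *m bvec a = r1 *: bvec a + s1 *: (Jmx *m bvec a) ->
  B *m bvec b = r2 *: bvec b + s2 *: (Jmx *m bvec b) ->
  B *m (bvec a + bvec b) = r *: (bvec a + bvec b) + s *: (Jmx *m (bvec a + bvec b)) ->
  r1 = r2 /\ s1 = s2.
Proof.
move=> ha hb ha' hb' /and5P[d1 d2 d3 d4 d5] d6 Ba Bb Bab.
rewrite mulmxDr Ba Bb mulmxDr !J_bvec // in Bab.
have c k := congr1 (fun w : vec => vcoord w k) Bab.
move: (c a) (c b) (c (jpartner a)) (c (jpartner b)).
rewrite !(vcoordD, vcoordZ) !vcoord_bvec // !eqxx.
rewrite (negbTE d1) (negbTE d2) (negbTE d3) (negbTE d4) (negbTE d5) (negbTE d6).
rewrite (eq_sym b a) (negbTE d1) (eq_sym b (jpartner a)) (negbTE d3)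
  (eq_sym (jpartner b) a) (negbTE d2) (eq_sym (jpartner a) a) (negbTE d5)
  (eq_sym (jpartner b) (jpartner a)) (negbTE d4) (eq_sym (jpartner b) b) (negbTE d6) /=.
move=> e1 e2 e3 e4.
have sa := jsign_neq0 R a; have sb := jsign_neq0 R b.
split; first by lra.
have -> : s1 = s by apply: (mulIf sa); nra.
by apply: (mulIf sb); nra.
Qed.

Lemma complex_line_map_scalar (B : 'M[R]_8) :
  (forall u : vec, u != 0 -> exists r s : R, B *m u = r *: u + s *: (Jmx *m u)) ->
  exists r s : R, B = r%:M + s *: Jmx.
Proof.
move=> HB.
have [r0 [s0 e0]] := HB _ (@bvec_neq0 R 0%N erefl).
have [r1 [s1 e1]] := HB _ (@bvec_neq0 R 1%N erefl).
have [r2 [s2 e2]] := HB _ (@bvec_neq0 R 2%N erefl).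
have [r3 [s3 e3]] := HB _ (@bvec_neq0 R 3%N erefl).
have [r4 [s4 e4]] := HB _ (@bvec_neq0 R 4%N erefl).
have [r5 [s5 e5]] := HB _ (@bvec_neq0 R 5%N erefl).
have [r6 [s6 e6]] := HB _ (@bvec_neq0 R 6%N erefl).
have [r7 [s7 e7]] := HB _ (@bvec_neq0 R 7%N erefl).
have pair a b ra sa rb sb : (a < 8)%N -> (b < 8)%N -> (jpartner a < 8)%N -> (jpartner b < 8)%N ->
    [&& a != b, a != jpartner b, jpartner a != b, jpartner a != jpartner b & a != jpartner a] ->
    b != jpartner b ->
    B *m bvec a = ra *: bvec a + sa *: (Jmx *m bvec a) ->
    B *m bvec b = rb *: bvec b + sb *: (Jmx *m bvec b) -> ra = rb /\ sa = sb.
  move=> ha hb ha' hb' d d' Ba Bb; have /and5P[ab _ _ _ _] := d.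
  have [r [s Bab]] := HB _ (bvecD_neq0 R ha hb ab).
  exact: complex_line_coeff_eq Bab.
have [r1_eq s1_eq] := pair 0%N 1%N _ _ _ _ erefl erefl erefl erefl erefl erefl e0 e1.
have [r2_eq s2_eq] := pair 0%N 2%N _ _ _ _ erefl erefl erefl erefl erefl erefl e0 e2.
have [r3_eq s3_eq] := pair 0%N 3%N _ _ _ _ erefl erefl erefl erefl erefl erefl e0 e3.
have [r5_eq s5_eq] := pair 0%N 5%N _ _ _ _ erefl erefl erefl erefl erefl erefl e0 e5.
have [r6_eq s6_eq] := pair 0%N 6%N _ _ _ _ erefl erefl erefl erefl erefl erefl e0 e6.
have [r7_eq s7_eq] := pair 0%N 7%N _ _ _ _ erefl erefl erefl erefl erefl erefl e0 e7.
have [r4_eq s4_eq] := pair 4%N 1%N _ _ _ _ erefl erefl erefl erefl erefl erefl e4 e1.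
subst r1 r2 r3 r5 r6 r7 s1 s2 s3 s5 s6 s7; subst r4 s4.
exists r0, s0; apply: matrix_bvecP => k hk; rewrite mulmxDl mul_scalar_mx -scalemxAl.
by do 8? (case: k hk => [|k] hk); rewrite ?e0 ?e1 ?e2 ?e3 ?e4 ?e5 ?e6 ?e7.
Qed.

Lemma complex_line_map_sqrN1 (B : 'M[R]_8) :
  (forall u : vec, u != 0 -> exists r s : R, B *m u = r *: u + s *: (Jmx *m u)) ->
  B *m B = - 1%:M -> B = Jmx \/ B = - Jmx.
Proof.
move=> /complex_line_map_scalar [r [s ->]] BB.
have := congr1 (fun w : vec => vcoord w 0%N) (congr1 (mulmx^~ (bvec 0)) BB).
have := congr1 (fun w : vec => vcoord w 4%N) (congr1 (mulmx^~ (bvec 0)) BB).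
rewrite -mulmxA !mulmxDl !mul_scalar_mx -!scalemxAl !mulmxDr -!scalemxAr !J_bvec //=.
rewrite -!scalemxAr !J_bvec //= mulNmx mul1mx.
rewrite !(vcoordD, vcoordZ, vcoordN) !vcoord_bvec //= => c4 c0.
have -> : r = 0 by nra.
have : (s - 1) * (s + 1) = 0 by nra.
rewrite raddf0 add0r; move/eqP; rewrite mulf_eq0 => /orP[] /eqP hs.
- by left; rewrite (_ : s = 1) ?scale1r //; lra.
- by right; rewrite (_ : s = -1) ?scaleN1r //; lra.
Qed.

End ComplexLines.

Section KahlerForm.
Variable R : realType.
Local Notation vec := (vec R).
Local Notation omega := (@omega R).

Lemma omegaE (u w : vec) : omega u w =
  (vcoord u 1 * vcoord w 5 - vcoord w 1 * vcoord u 5) + (vcoord u 2 * vcoord w 6 - vcoord w 2 * vcoord u 6)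
  + (vcoord u 3 * vcoord w 7 - vcoord w 3 * vcoord u 7) + (vcoord u 4 * vcoord w 0 - vcoord w 4 * vcoord u 0).
Proof. by []. Qed.

Lemma gE (u w : vec) : g u w = vcoord u 0 * vcoord w 0 + (vcoord u 1 * vcoord w 1 +
  (vcoord u 2 * vcoord w 2 + (vcoord u 3 * vcoord w 3 + (vcoord u 4 * vcoord w 4 +
  (vcoord u 5 * vcoord w 5 + (vcoord u 6 * vcoord w 6 + vcoord u 7 * vcoord w 7)))))).
Proof. by rewrite /g big_ord8. Qed.

Lemma omega_skew (u w : vec) : omega u w = - omega w u.
Proof. by rewrite !omegaE; ring. Qed.

Lemma omega_diag (u : vec) : omega u u = 0.
Proof. by rewrite omegaE; ring. Qed.

Lemma omegaNl (u w : vec) : omega (- u) w = - omega u w.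
Proof. by rewrite !omegaE !vcoordN; ring. Qed.

Lemma omega_J (u w : vec) : omega (Jmx *m u) (Jmx *m w) = omega u w.
Proof. by rewrite !omegaE !vcoord_J //=; ring. Qed.

Lemma omega_gJ (u w : vec) : omega u w = g (Jmx *m u) w.
Proof. by rewrite omegaE gE !vcoord_J //=; ring. Qed.

Lemma g_omegaJ (u w : vec) : g u w = - omega (Jmx *m u) w.
Proof. by rewrite omega_gJ JmxK !gE !vcoordN; ring. Qed.

Lemma g_ge0 (u : vec) : 0 <= g u u.
Proof. by rewrite gE; nra. Qed.

Lemma g_mx (u w : vec) : g u w = (u^T *m w) 0 0.
Proof. by rewrite /g mxE; apply: eq_bigr => a _; rewrite mxE. Qed.

Lemma omega_mx (u w : vec) : omega u w = (u^T *m Jmx^T *m w) 0 0.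
Proof. by rewrite omega_gJ g_mx trmx_mul. Qed.

Lemma bvec_form_mx (M : 'M[R]_8) a b : ((bvec a)^T *m M *m bvec b) 0 0 = M (inord a) (inord b).
Proof. by rewrite /bvec -mulmxA -colE trmx_delta -rowE !mxE. Qed.

Lemma omega_bre_bre i j : (i < 4)%N -> (j < 4)%N -> omega (bre i) (bre j) = 0.
Proof.
move=> hi hj; rewrite omegaE /bre /re_idx.
by do 4? (case: i hi => [|i] hi); do 4? (case: j hj => [|j] hj); rewrite //= !vcoord_bvec //=; ring.
Qed.

Lemma omega_bre_bim i j : (i < 4)%N -> (j < 4)%N -> omega (bre i) (bim j) = (i == j)%:R.
Proof.
move=> hi hj; rewrite omegaE /bre /bim /re_idx /im_idx.
by do 4? (case: i hi => [|i] hi); do 4? (case: j hj => [|j] hj); rewrite //= !vcoord_bvec //=; ring.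
Qed.

Lemma omega_bim_bim i j : (i < 4)%N -> (j < 4)%N -> omega (bim i) (bim j) = 0.
Proof.
move=> hi hj; rewrite omegaE /bim /im_idx.
by do 4? (case: i hi => [|i] hi); do 4? (case: j hj => [|j] hj); rewrite //= !vcoord_bvec //=; ring.
Qed.

Lemma omega_bim_bre i j : (i < 4)%N -> (j < 4)%N -> omega (bim i) (bre j) = - (i == j)%:R.
Proof. by move=> hi hj; rewrite omega_skew omega_bre_bim // (eq_sym j). Qed.

Lemma wedge_omega_pfaff (V : 'I_4 -> vec) :
  wedge2_2 omega omega V = 2 * pfaff omega (V (inord 0)) (V (inord 1)) (V (inord 2)) (V (inord 3)).
Proof.
have := @alternating_sum_perm4 _ (fun a b => omega (V (inord a)) (V (inord b))) (fun a b => omega_skew _ _).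
rewrite /wedge2_2; under eq_bigr => s _ do rewrite !inord_val.
by move=> ->; rewrite /pfaff; field.
Qed.

Lemma wedge_omega_tup4 (a b c d : vec) : wedge2_2 omega omega (tup4 a b c d) = 2 * pfaff omega a b c d.
Proof. by rewrite wedge_omega_pfaff; case: (tup4E a b c d) => -> -> -> ->. Qed.

Lemma bvec_re_im a : (a < 8)%N ->
  exists2 i, (i < 4)%N & (bvec a = bre i :> vec) \/ (bvec a = bim i :> vec).
Proof.
move=> ha; do 8? (case: a ha => [|a] ha);
  by [exists 0%N; [|right] | exists 1%N; [|left] | exists 2%N; [|left] | exists 3%N; [|left]
    | exists 0%N; [|left] | exists 1%N; [|right] | exists 2%N; [|right] | exists 3%N; [|right]].
Qed.

End KahlerForm.

Section ComplexLinear.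
Variable R : realType.
Local Notation C := (R[i]).
Local Notation vec := (vec R).
Local Notation omega := (@omega R).
Variable A : 'M[R]_8.
Hypothesis A_J : A *m Jmx = Jmx *m A.

Definition cmx : 'M[C]_4 := \matrix_(i, k) theta i (A *m bre k).

Lemma theta_A_bim i k : (k < 4)%N -> theta i (A *m bim k) = 'i%C * theta i (A *m bre k).
Proof. by move=> hk; rewrite -J_bre // mulmxA A_J -mulmxA theta_J. Qed.

Lemma theta_complex_linear i (v : vec) : theta i (A *m v) = \sum_(k < 4) cmx i k * theta k v.
Proof.
rewrite big_ord4 !mxE theta_mul !(thetaE (inord _) v) /re_idx /im_idx !inordK //=.
have := theta_A_bim i (k:=0) erefl; have := theta_A_bim i (k:=1) erefl.
have := theta_A_bim i (k:=2) erefl; have := theta_A_bim i (k:=3) erefl.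
rewrite /bre /bim /re_idx /im_idx /= => -> -> -> ->; ring.
Qed.

Lemma Omega_complex_linear (V : 'I_4 -> vec) : Omega (fun j => A *m V j) = \det cmx * Omega V.
Proof.
rewrite /Omega /wedge1_4 -det_mulmx; congr (\det _); apply/matrixP => i j.
by rewrite !mxE theta_complex_linear; apply: eq_bigr => k _; rewrite !mxE.
Qed.

Lemma Omega_complex_linear_pres :
  (forall V : 'I_4 -> vec, complex.Im (Omega (fun j => A *m V j)) = complex.Im (Omega V)) ->
  forall V : 'I_4 -> vec, Omega (fun j => A *m V j) = Omega V.
Proof.
move=> ImOmA V; suff det1 : \det cmx = 1 by rewrite Omega_complex_linear det1 mul1r.
have := ImOmA frame_re; have := ImOmA frame_im0.
rewrite !Omega_complex_linear Omega_frame_re Omega_frame_im0.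
case: (\det cmx) => x y /= h1 h2.
by apply/eqP; rewrite eq_complex /=; apply/andP; split; apply/eqP; lra.
Qed.

Lemma omega_A_J (u w : vec) : omega (A *m (Jmx *m u)) (A *m (Jmx *m w)) = omega (A *m u) (A *m w).
Proof. by rewrite !mulmxA A_J -!mulmxA omega_J. Qed.

Section PfaffianPreserved.
Hypothesis pfaff_A : forall a b c d : vec,
  pfaff omega (A *m a) (A *m b) (A *m c) (A *m d) = pfaff omega a b c d.

(* X and Y are the components of omega in the image of the unitary frame; the
   Pfaffian identities below force X = 1 and Y = 0. *)
Local Notation X i j := (omega (A *m bre i) (A *m bim j)).
Local Notation Y i j := (omega (A *m bre i) (A *m bre j)).

Lemma omega_A_bim_bre i j : (i < 4)%N -> (j < 4)%N -> omega (A *m bim i) (A *m bre j) = - X i j.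
Proof. by move=> hi hj; rewrite -omega_A_J J_bim // J_bre // mulmxN omegaNl. Qed.

Lemma omega_A_bim_bim i j : (i < 4)%N -> (j < 4)%N -> omega (A *m bim i) (A *m bim j) = Y i j.
Proof. by move=> hi hj; rewrite -!J_bre // omega_A_J. Qed.

Lemma X_sym i j : (i < 4)%N -> (j < 4)%N -> X j i = X i j.
Proof. by move=> hi hj; rewrite omega_skew omega_A_bim_bre // opprK. Qed.

Lemma Y_skew i j : Y j i = - Y i j.
Proof. exact: omega_skew. Qed.

Lemma pfaff_im_eq i j k : (i < 4)%N -> (j < 4)%N -> (k < 4)%N ->
  X i i * Y j k + Y i j * X i k - Y i k * X i j = 0.
Proof.
move=> hi hj hk; have := pfaff_A (bre i) (bim i) (bre j) (bre k).
rewrite /pfaff !omega_A_bim_bre // !omega_bre_bim // !omega_bre_bre // !omega_bim_bre // eqxx /=.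
by move=> h; lra.
Qed.

Lemma pfaff_re_eq i j k : (i < 4)%N -> (j < 4)%N -> (k < 4)%N ->
  X i i * X j k - Y i j * Y i k - X i k * X i j = (j == k)%:R - (i == k)%:R * (i == j)%:R.
Proof.
move=> hi hj hk; have := pfaff_A (bre i) (bim i) (bre j) (bim k).
rewrite /pfaff omega_A_bim_bim // omega_A_bim_bre // !omega_bre_bim // !omega_bre_bre //.
by rewrite !omega_bim_bim // !omega_bim_bre // eqxx /= => h; lra.
Qed.

Lemma offdiag_eq0_of_third i j k : (i < 4)%N -> (j < 4)%N -> (k < 4)%N ->
  i != j -> i != k -> j != k -> X j k = 0 /\ Y j k = 0.
Proof.
move=> hi hj hk dij dik djk.
have e1 := pfaff_re_eq hi hj hk; have e1i := pfaff_im_eq hi hj hk.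
have e2 := pfaff_re_eq hj hi hk; have e2i := pfaff_im_eq hj hi hk.
have eD := pfaff_re_eq hi hj hj.
rewrite (negbTE djk) (negbTE dik) /= in e1.
rewrite (negbTE dik) (negbTE djk) /= in e2.
rewrite eqxx (negbTE dij) /= in eD.
rewrite (X_sym hi hj) (Y_skew i j) in e2 e2i.
have E1 : X i i * X j k - Y i j * Y i k - X i k * X i j = 0 by lra.
have E2 : X j j * X i k - (- Y i j) * Y j k - X j k * X i j = 0 by lra.
have D : X i i * X j j - Y i j * Y i j - X i j * X i j = 1 by lra.
(* the 2x2 system in (X j k, Y j k) has determinant D = 1 *)
split.
- rewrite -[X j k]mulr1 -D.
  have -> : X j k * (X i i * X j j - Y i j * Y i j - X i j * X i j) =
    X j j * (X i i * X j k - Y i j * Y i k - X i k * X i j)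
    + X i j * (X j j * X i k - (- Y i j) * Y j k - X j k * X i j)
    + Y i j * (X j j * Y i k + - Y i j * X j k - Y j k * X i j) by ring.
  by rewrite E1 E2 e2i !mulr0 !addr0.
- rewrite -[Y j k]mulr1 -D.
  have -> : Y j k * (X i i * X j j - Y i j * Y i j - X i j * X i j) =
    X j j * (X i i * Y j k + Y i j * X i k - Y i k * X i j)
    + X i j * (X j j * Y i k + - Y i j * X j k - Y j k * X i j)
    - Y i j * (X j j * X i k - (- Y i j) * Y j k - X j k * X i j) by ring.
  by rewrite e1i E2 e2i !mulr0 !addr0 subr0.
Qed.

Lemma third_index i j : (i < 4)%N -> (j < 4)%N -> exists k, [&& (k < 4)%N, k != i & k != j].
Proof.
move=> hi hj; do 4? (case: i hi => [|i] hi); do 4? (case: j hj => [|j] hj);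
  by [exists 0%N | exists 1%N | exists 2%N | exists 3%N].
Qed.

Lemma offdiag_eq0 i j : (i < 4)%N -> (j < 4)%N -> i != j -> X i j = 0 /\ Y i j = 0.
Proof.
move=> hi hj dij; have [k /and3P[hk dki dkj]] := third_index hi hj.
by apply: (@offdiag_eq0_of_third k) => //; rewrite eq_sym.
Qed.

Lemma X_diag_ge0 i : (i < 4)%N -> 0 <= X i i.
Proof. by move=> hi; rewrite -J_bre // mulmxA A_J -mulmxA omega_gJ; exact: g_ge0. Qed.

Lemma X_diag_mul i j : (i < 4)%N -> (j < 4)%N -> i != j -> X i i * X j j = 1.
Proof.
move=> hi hj dij; have := pfaff_re_eq hi hj hj.
by case: (offdiag_eq0 hi hj dij) => -> ->; rewrite eqxx (negbTE dij) /= => h; lra.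
Qed.

Lemma X_diag i : (i < 4)%N -> X i i = 1.
Proof.
move=> hi; have [k /and3P[hk dki _]] := third_index hi hi.
have [l /and3P[hl dli dlk]] := third_index hi hk.
rewrite !(eq_sym _ i) (eq_sym l) in dki dli dlk.
have := X_diag_ge0 hi.
have := X_diag_mul hi hk dki; have := X_diag_mul hi hl dli; have := X_diag_mul hk hl dlk.
by move=> h1 h2 h3 h4; nra.
Qed.

Lemma omega_A_bvec a b : (a < 8)%N -> (b < 8)%N ->
  omega (A *m bvec a) (A *m bvec b) = omega (bvec a) (bvec b).
Proof.
move=> ha hb; have [i hi [-> | ->]] := bvec_re_im R ha; have [j hj [-> | ->]] := bvec_re_im R hb;
  rewrite ?omega_bre_bre ?omega_bre_bim ?omega_bim_bre ?omega_bim_bim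
    ?omega_A_bim_bre ?omega_A_bim_bim //; case: (eqVneq i j) => [<- | dij];
  rewrite ?eqxx ?X_diag ?(offdiag_eq0 hi hj dij).1 ?(offdiag_eq0 hi hj dij).2 ?oppr0 //.
all: exact: omega_diag.
Qed.

Lemma omega_A (u w : vec) : omega (A *m u) (A *m w) = omega u w.
Proof.
have omega_Amx (u' w' : vec) : omega (A *m u') (A *m w') = (u'^T *m (A^T *m Jmx^T *m A) *m w') 0 0.
  by rewrite omega_mx trmx_mul !mulmxA.
suff AJA : A^T *m Jmx^T *m A = Jmx^T by rewrite omega_Amx AJA -omega_mx.
apply/matrixP => a b; rewrite -(inord_val a) -(inord_val b).
by rewrite -bvec_form_mx -omega_Amx omega_A_bvec ?ltn_ord // omega_mx bvec_form_mx.
Qed.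

Lemma g_A (u w : vec) : g (A *m u) (A *m w) = g u w.
Proof. by rewrite !g_omegaJ mulmxA -A_J -mulmxA omega_A. Qed.

End PfaffianPreserved.
End ComplexLinear.

Section Antilinear.
Variable R : realType.
Local Notation C := (R[i]).
Local Notation vec := (vec R).
Local Notation omega := (@omega R).

Definition Phi_re (c : R) (V : 'I_4 -> vec) : R :=
  c * complex.Re (Omega V) - 2^-1 * wedge2_2 omega omega V.

Definition one_plus_J : 'M[R]_8 := 1%:M + Jmx.
Definition one_minus_J : 'M[R]_8 := 1%:M - Jmx.

Lemma omega_one_plus_J (u w : vec) :
  omega (one_plus_J *m u) (one_plus_J *m w) = 2 * omega u w.
Proof. by rewrite /one_plus_J !mulmxDl !mul1mx !omegaE !vcoordD !vcoord_J //=; ring. Qed.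

Lemma omega_one_minus_J (u w : vec) :
  omega (one_minus_J *m u) (one_minus_J *m w) = 2 * omega u w.
Proof. by rewrite /one_minus_J !mulmxBl !mul1mx !omegaE !vcoordB !vcoord_J //=; ring. Qed.

Lemma wedge_omega_one_plus_J (V : 'I_4 -> vec) :
  wedge2_2 omega omega (fun j => one_plus_J *m V j) = 4 * wedge2_2 omega omega V.
Proof. by rewrite !wedge_omega_pfaff /pfaff !omega_one_plus_J; ring. Qed.

Lemma wedge_omega_one_minus_J (V : 'I_4 -> vec) :
  wedge2_2 omega omega (fun j => one_minus_J *m V j) = 4 * wedge2_2 omega omega V.
Proof. by rewrite !wedge_omega_pfaff /pfaff !omega_one_minus_J; ring. Qed.

Lemma Omega_one_plus_J (V : 'I_4 -> vec) : Omega (fun j => one_plus_J *m V j) = - 4 * Omega V.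
Proof.
have -> : - 4 = (1 + 'i%C) ^+ 4 :> C.
  by rewrite !exprS expr0; apply/eqP; rewrite eq_complex /=; apply/andP; split; apply/eqP; ring.
rewrite /Omega /wedge1_4 -detZ; congr (\det _); apply/matrixP => i j.
by rewrite !mxE /one_plus_J mulmxDl mul1mx thetaD theta_J; ring.
Qed.

Lemma conj_theta k (v : vec) :
  conjc (theta k v) = (vcoord v (re_idx k))%:C - 'i%C * (vcoord v (im_idx k))%:C.
Proof.
by rewrite thetaE; apply/eqP; rewrite eq_complex /=; apply/andP; split; apply/eqP; ring.
Qed.

Variable A : 'M[R]_8.
Hypothesis A_J : A *m Jmx = - (Jmx *m A).

Definition acmx : 'M[C]_4 := \matrix_(i, k) theta i (A *m bre k).

Lemma theta_A_bim_anti i k : (k < 4)%N -> theta i (A *m bim k) = - 'i%C * theta i (A *m bre k).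
Proof. by move=> hk; rewrite -J_bre // mulmxA A_J mulNmx -mulmxA thetaN theta_J mulNr. Qed.

Lemma theta_antilinear i (v : vec) : theta i (A *m v) = \sum_(k < 4) acmx i k * conjc (theta k v).
Proof.
rewrite big_ord4 !mxE theta_mul !conj_theta /re_idx /im_idx !inordK //=.
have := theta_A_bim_anti i (k:=0) erefl; have := theta_A_bim_anti i (k:=1) erefl.
have := theta_A_bim_anti i (k:=2) erefl; have := theta_A_bim_anti i (k:=3) erefl.
rewrite /bre /bim /re_idx /im_idx /= => -> -> -> ->; ring.
Qed.

Lemma Omega_antilinear (V : 'I_4 -> vec) :
  Omega (fun j => A *m V j) = \det acmx * conjc (Omega V).
Proof.
rewrite /Omega /wedge1_4 -det_map_mx -det_mulmx; congr (\det _); apply/matrixP => i j.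
by rewrite !mxE theta_antilinear; apply: eq_bigr => k _; rewrite !mxE.
Qed.

Lemma Re_Omega_antilinear :
  (forall V : 'I_4 -> vec, complex.Im (Omega (fun j => A *m V j)) = complex.Im (Omega V)) ->
  forall V : 'I_4 -> vec, complex.Re (Omega (fun j => A *m V j)) = - complex.Re (Omega V).
Proof.
move=> ImOmA V; suff detN1 : \det acmx = -1.
  by rewrite Omega_antilinear detN1; case: (Omega V) => x y /=; ring.
have := ImOmA frame_re; have := ImOmA frame_im0.
rewrite !Omega_antilinear Omega_frame_re Omega_frame_im0 rmorph1.
have -> : conjc ('i%C : C) = - 'i%C.
  by apply/eqP; rewrite eq_complex /=; apply/andP; split; apply/eqP; ring.
case: (\det acmx) => x y /= h1 h2.
by apply/eqP; rewrite eq_complex /=; apply/andP; split; apply/eqP; lra.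
Qed.

(* Test Phi_re on the frame and on its image under 1 + J: since A (1 + J) = (1 - J) A,
   both evaluations compare the same omega-terms but with opposite signs of c. *)
Lemma antilinear_not_stab (c : R) : 0 < c ->
  (forall V : 'I_4 -> vec, complex.Im (Omega (fun j => A *m V j)) = complex.Im (Omega V)) ->
  ~ (forall V : 'I_4 -> vec, Phi_re c (fun j => A *m V j) = Phi_re c V).
Proof.
move=> c_gt0 ImOmA ReA.
have ReOmA := Re_Omega_antilinear ImOmA.
have e1 := ReA frame_re.
have e2 := ReA (fun j => one_plus_J *m frame_re j).
have AJ1 : (fun j => A *m (one_plus_J *m frame_re j)) =
    (fun j => one_minus_J *m (A *m frame_re j)).
  apply: functional_extensionality => j; rewrite !mulmxA; congr (_ *m _).
  by rewrite /one_plus_J /one_minus_J mulmxDr mulmx1 A_J mulmxBl mul1mx.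
move: e1 e2; rewrite /Phi_re !ReOmA AJ1 wedge_omega_one_minus_J wedge_omega_one_plus_J.
rewrite Omega_one_plus_J Omega_frame_re.
have -> : complex.Re (- 4 * 1 : C) = - 4 by rewrite /=; ring.
rewrite /= => e1 e2; lra.
Qed.

End Antilinear.

Lemma coshR_gt0 (R : realType) (x : R) : 0 < coshR x.
Proof. by rewrite /coshR divr_gt0 // addr_gt0 // exp.expR_gt0. Qed.

Lemma sinhR_neq0 (R : realType) (x : R) : x != 0 -> sinhR x != 0.
Proof.
move=> x0; rewrite /sinhR mulf_neq0 ?invr_eq0 ?pnatr_eq0 // subr_eq0.
by apply/eqP => /exp.expR_inj; apply/eqP; apply: contra x0 => /eqP ?; apply/eqP; lra.
Qed.

Section Stabiliser.
Variable R : realType.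
Local Notation vec := (vec R).
Local Notation omega := (@omega R).

Lemma Re_cplx (x y : R) : complex.Re (x%:C + 'i%C * y%:C) = x.
Proof. by rewrite /=; ring. Qed.

Lemma Im_cplx (x y : R) : complex.Im (x%:C + 'i%C * y%:C) = y.
Proof. by rewrite /=; ring. Qed.

Lemma stab_Phi_parts (tau : R) (A : 'M[R]_8) : tau != 0 ->
  pullback4 A (Phi tau) = Phi tau ->
  (forall V : 'I_4 -> vec, complex.Im (Omega (fun j => A *m V j)) = complex.Im (Omega V)) /\
  (forall V : 'I_4 -> vec, Phi_re (coshR (2 * tau)) (fun j => A *m V j) = Phi_re (coshR (2 * tau)) V).
Proof.
move=> tau0 /(congr1 (fun f => f _)) PhiA.
have sh0 : sinhR (2 * tau) != 0 by rewrite sinhR_neq0 // mulf_neq0 // pnatr_eq0.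
split=> V; move: (PhiA V); rewrite /pullback4 /Phi.
- by move/(congr1 (@complex.Im R)); rewrite !Im_cplx; apply: mulfI.
- by move/(congr1 (@complex.Re R)); rewrite !Re_cplx => h; exact: h.
Qed.

Lemma SU4_stab_Phi (tau : R) (A : 'M[R]_8) : SU4 A -> stab_Phi tau A.
Proof.
case=> uA [_ [omegaA OmegaA]]; split=> //.
apply: functional_extensionality => V; rewrite /pullback4 /Phi.
have -> : Omega (fun j => A *m V j) = Omega V by exact: (congr1 (fun f => f V) OmegaA).
have omA u w : omega (A *m u) (A *m w) = omega u w := congr1 (fun f => f u w) omegaA.
congr ((_ - _ * _)%:C + _); rewrite /wedge2_2; congr (_ * _); apply: eq_bigr => s _.
by rewrite !omA.
Qed.

Lemma commuting_stab_SU4 (c : R) (A : 'M[R]_8) :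
  A \in unitmx -> A *m Jmx = Jmx *m A ->
  (forall V : 'I_4 -> vec, complex.Im (Omega (fun j => A *m V j)) = complex.Im (Omega V)) ->
  (forall V : 'I_4 -> vec, Phi_re c (fun j => A *m V j) = Phi_re c V) ->
  SU4 A.
Proof.
move=> uA A_J ImOmA ReA.
have OmegaA := Omega_complex_linear_pres A_J ImOmA.
have pfaffA a b c' d : pfaff omega (A *m a) (A *m b) (A *m c') (A *m d) = pfaff omega a b c' d.
  have := ReA (tup4 a b c' d); rewrite /Phi_re OmegaA.
  have -> : (fun j => A *m tup4 a b c' d j) = tup4 (A *m a) (A *m b) (A *m c') (A *m d).
    by apply: functional_extensionality => j; rewrite /tup4; case: j => [[|[|[|[|?]]]] ?].
  by rewrite !wedge_omega_tup4 => h; lra.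
split=> //; split; first exact: g_A.
by split; apply: functional_extensionality => u;
  [apply: functional_extensionality => w; exact: omega_A | exact: OmegaA].
Qed.

End Stabiliser.

Theorem mainTheorem7 (R : realType) (tau : R) : tau != 0 ->
  forall A : 'M[R]_8, stab_Phi tau A <-> SU4 A.
Proof.
move=> tau0 A; split; last exact: SU4_stab_Phi.
case=> uA /(stab_Phi_parts tau0) [ImOmA ReA].
have AJA_sqr : A *m Jmx *m invmx A *m (A *m Jmx *m invmx A) = - 1%:M.
  by rewrite !mulmxA mulmxKV // -(mulmxA A) Jmx_sqr mulmxN mulmx1 mulNmx mulmxV.
have [AJA | AJA] := complex_line_map_sqrN1 (conjJ_complex_line uA ImOmA) AJA_sqr.
- have A_J : A *m Jmx = Jmx *m A by rewrite -{2}AJA mulmxKV.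
  exact: commuting_stab_SU4 uA A_J ImOmA ReA.
- have A_J : A *m Jmx = - (Jmx *m A) by rewrite -mulNmx -AJA mulmxKV.
  by case: (antilinear_not_stab A_J (coshR_gt0 _) ImOmA ReA).
Qed.
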